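(* Let $n$ be a positive integer, $1\le k\le n$, and $w\in\mathfrak S_n$. The relation $\le_{\mathcal P_w(n,k)}$ on $\mathrm{Inv}_k(w)$ is a partial order (in particular, it is antisymmetric). Furthermore, if $X\in\mathrm{Inv}_{k+1}(w)$, then the elements of $P(X)$ form an antichain in $\mathcal P_w(n,k)$.
   Context: $\mathfrak S_n$ is the symmetric group on $[n]$. $\binom{[n]}{m}$ is the set of $m$-element subsets of $[n]$, written $[x_1,\dots,x_m]$ with $x_1<\dots<x_m$. For $X=[x_1,\dots,x_m]$, $X_i$ is $X$ with $x_i$ removed and $P(X)=\{X_1,\dots,X_m\}$. $\mathrm{Inv}_m(w)=\{[x_1,\dots,x_m]\in\binom{[n]}{m}: w^{-1}(x_1)>\dots>w^{-1}(x_m)\}$. $X\in\binom{[n]}{m}$ is an $m$-quasi-inversion of $w$ if exactly one of the pairs $[x_a,x_b]$, $a<b$, is not in $\mathrm{Inv}_2(w)$. The relation $\le_{\mathcal P_w(n,k)}$ on $\mathrm{Inv}_k(w)$ is the reflexive-transitive closure of the quasi-inversion relations: whenever $X\in\binom{[n]}{k+1}$ is a $(k+1)$-quasi-inversion with $P(X)\cap\mathrm{Inv}_k(w)=\{X_i,X_{i+1}\}$, set $X_i<X_{i+1}$ if $k-i$ is odd and $X_{i+1}<X_i$ if $k-i$ is even. $\mathcal P_w(n,k)$ denotes $\mathrm{Inv}_k(w)$ with this relation. *)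

(* [n] = {1..n} is modelled by 'I_n = {0..n-1} (order-preserving relabeling). *)
From mathcomp Require Import all_boot all_fingroup.
From Stdlib Require Import Relations.
Set Implicit Arguments. Unset Strict Implicit. Unset Printing Implicit Defensive.

Section Defs.
Variable n : nat.

Definition elts (X : {set 'I_n}) : seq 'I_n :=
  sort (fun a b : 'I_n => (a <= b)%N) (enum X).

Definition invk (m : nat) (w : 'S_n) (X : {set 'I_n}) : bool :=
  (#|X| == m) && sorted (fun a b : 'I_n => (w^-1)%g b < (w^-1)%g a)%N (elts X).

(* X_i : X with x_i removed (i is 1-indexed) *)
Definition Xrem (X : {set 'I_n}) (i : nat) : {set 'I_n} :=
  [set x in X | index x (elts X) != i.-1].

Definition PX (X : {set 'I_n}) : {set {set 'I_n}} :=
  [set Xrem X (val i).+1 | i : 'I_#|X|].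

Definition quasi_inv (m : nat) (w : 'S_n) (X : {set 'I_n}) : bool :=
  (#|X| == m) &&
  (#|[set p : 'I_n * 'I_n | [&& p.1 \in X, p.2 \in X, (p.1 < p.2)%N &
                                ~~ invk 2 w [set p.1; p.2]]]| == 1).

(* generating relations of <=_{P_w(n,k)} : qcover k w Y Z means Y < Z *)
Definition qcover (k : nat) (w : 'S_n) (Y Z : {set 'I_n}) : Prop :=
  exists (X : {set 'I_n}) (i : nat),
    [/\ quasi_inv k.+1 w X, (1 <= i <= k)%N,
        PX X :&: [set U | invk k w U] = [set Xrem X i; Xrem X i.+1] &
        (if odd (k - i) then Y = Xrem X i /\ Z = Xrem X i.+1
         else Y = Xrem X i.+1 /\ Z = Xrem X i)].

Definition Ple (k : nat) (w : 'S_n) : relation {set 'I_n} :=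
  clos_refl_trans _ (qcover k w).

End Defs.

(* Weight a k-set Y = [y_1, ..., y_k] by the alternating sum of h(y_j) with
   sign (-1)^(k-j), for a function h on [n].  A generating relation of
   P_w(n,k) exchanges the entries x_i and x_(i+1) of a quasi-inversion X in
   position i, the orientation rule makes the weight grow by h(x_(i+1)) - h(x_i),
   and since X_i and X_(i+1) are inversions, (x_i, x_(i+1)) is the unique
   non-inversion of X.  So the weight is monotone along P_w(n,k) whenever h is
   monotone for the order a < b, w^-1(a) < w^-1(b); for h the identity it is
   strictly monotone, which gives antisymmetry.  If X is in Inv_(k+1)(w) and
   c is in X, no element of X - c is comparable to c in that order, so the
   indicator of the up-set of c and minus the indicator of its down-set both
   vanish on X - c.  Their weights are 0 on X - c and +-(sign of c) on X - d,
   so X - c <= X - d forces c = d. *)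

From Stdlib Require Import Relations.
From mathcomp Require Import all_boot all_order all_fingroup.
From mathcomp Require Import ssralg ssrnum ssrint ring.
Set Implicit Arguments. Unset Strict Implicit. Unset Printing Implicit Defensive.
Import Order.TTheory GRing.Theory Num.Theory.

Section ClosReflTransHomo.
Variables (T : Type) (R : relation T) (d : Order.disp_t) (U : porderType d).
Variable f : T -> U.

Lemma clos_rt_homo : (forall x y, R x y -> f x <= f y)%O ->
  forall x y, clos_refl_trans T R x y -> (f x <= f y)%O.
Proof.
move=> fR x y; elim=> [{}x {}y /fR //|//|{}x z {}y _ fxz _ fzy].
exact: le_trans fxz fzy.
Qed.

Lemma clos_rt_antisym : (forall x y, R x y -> f x < f y)%O ->
  forall x y, clos_refl_trans T R x y -> clos_refl_trans T R y x -> x = y.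
Proof.
move=> fR.
have strict x y : clos_refl_trans T R x y -> x = y \/ (f x < f y)%O.
  elim=> [{}x {}y /fR|{}x|{}x z {}y _ [->|fxz] _ [<-|fzy]]; try by [left|right].
  by right; exact: lt_trans fxz fzy.
move=> x y /strict[//|fxy] /strict[//|fyx].
by have := lt_trans fxy fyx; rewrite ltxx.
Qed.

End ClosReflTransHomo.

Lemma sorted_sub_rel (T : eqType) (r1 r2 : rel T) (s : seq T) :
  transitive r1 -> irreflexive r1 -> transitive r2 ->
  sorted r1 s -> sorted r2 s -> {in s &, forall x y, r1 x y -> r2 x y}.
Proof.
move=> tr1 irr1 tr2 s1 s2 x y xs ys rxy.
have neq_xy : x != y by apply: contraTneq rxy => ->; rewrite irr1.
have [lt_xy|lt_yx|eq_xy] := ltngtP (index x s) (index y s).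
- exact: (sorted_ltn_index tr2 s2).
- by have := tr1 _ _ _ rxy (sorted_ltn_index tr1 s1 y x ys xs lt_yx); rewrite irr1.
- by move: neq_xy; rewrite -(nth_index x xs) eq_xy nth_index ?eqxx.
Qed.

Section Elts.
Variable n : nat.
Implicit Types (S X : {set 'I_n}) (x : 'I_n).

Lemma sorted_elts S : sorted <%O (elts S).
Proof. by have := sort_lt_sorted (enum S); rewrite enum_uniq. Qed.

Lemma uniq_elts S : uniq (elts S).
Proof. exact/lt_sorted_uniq/sorted_elts. Qed.

Lemma mem_elts S x : (x \in elts S) = (x \in S).
Proof. by rewrite mem_sort mem_enum. Qed.

Lemma size_elts S : size (elts S) = #|S|.
Proof. by rewrite size_sort cardE. Qed.

Lemma elts_sorted_eq S s : sorted <%O s -> S =i s -> elts S = s.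
Proof.
by move=> s_sorted eqSs; apply: lt_sorted_eq (sorted_elts S) s_sorted _ => x; rewrite mem_elts.
Qed.

Lemma elts_setD1 S s1 x s2 : elts S = s1 ++ x :: s2 -> elts (S :\ x) = s1 ++ s2.
Proof.
move=> eS; have := sorted_elts S; rewrite eS => sorted_S.
have x_notin : x \notin s1 ++ s2.
  by have := uniq_elts S; rewrite eS -cat1s uniq_catCA /= => /andP[].
apply: elts_sorted_eq.
  by apply: subseq_lt_sorted sorted_S; rewrite cat_subseq ?subseq_cons.
move=> y; rewrite !inE -mem_elts eS !mem_cat inE.
by case: (eqVneq y x) => [->|_]; [rewrite -mem_cat (negbTE x_notin)|].
Qed.

Lemma Xrem_nth X x0 m : m < #|X| -> Xrem X m.+1 = X :\ nth x0 (elts X) m.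
Proof.
rewrite -size_elts => lt_m; apply/setP=> y; rewrite !inE.
case yX: (y \in X); rewrite ?andbT ?andbF //=; rewrite -mem_elts in yX.
congr (~~ _); apply/eqP/eqP => [<-|->]; first by rewrite nth_index.
by rewrite index_uniq ?uniq_elts.
Qed.

End Elts.

Section Inversions.
Variables (n : nat) (w : 'S_n).
Implicit Types (S X : {set 'I_n}) (u v x y : 'I_n).

Definition noninv u v := (u < v)%N && ((w^-1)%g u < (w^-1)%g v)%N.

Lemma noninv_trans : transitive noninv.
Proof.
move=> v u x /andP[uv puv] /andP[vx pvx].
by rewrite /noninv (ltn_trans uv vx) (ltn_trans puv pvx).
Qed.

Lemma invk_noninv m S u v : invk m w S -> u \in S -> v \in S -> ~~ noninv u v.
Proof.
case/andP=> _ sorted_S uS vS; apply/negP => /andP[uv puv].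
have desc : transitive (fun a b : 'I_n => (w^-1)%g b < (w^-1)%g a)%N.
  by move=> y x z pxy pyz; exact: ltn_trans pyz pxy.
have inv_uv : ((w^-1)%g v < (w^-1)%g u)%N.
  by apply: (sorted_sub_rel lt_trans ltxx desc (sorted_elts S)); rewrite ?mem_elts.
by move: puv; rewrite ltnNge ltnW.
Qed.

Lemma invk_setD1 m X x u v : invk m w (X :\ x) ->
  u \in X -> v \in X -> noninv u v -> x = u \/ x = v.
Proof.
move=> inv uX vX nuv.
case: (eqVneq u x) => [->|ux]; first by left.
case: (eqVneq v x) => [->|vx]; first by right.
have uXx : u \in X :\ x by rewrite !inE ux uX.
have vXx : v \in X :\ x by rewrite !inE vx vX.
by have := invk_noninv inv uXx vXx; rewrite nuv.
Qed.

Lemma quasi_inv_noninv m X : quasi_inv m w X ->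
  exists u v, [/\ u \in X, v \in X & noninv u v].
Proof.
case/andP=> _ /cards1P[[u v] /setP/(_ (u, v))].
rewrite !inE eqxx /= => /and4P[uX vX uv not_inv]; exists u, v; split => //.
have neq_uv : u != v by rewrite neq_ltn uv.
have not_desc : ~~ ((w^-1)%g v < (w^-1)%g u)%N.
  apply: contra not_inv => puv.
  rewrite /invk cards2 neq_uv /= (@elts_sorted_eq _ _ [:: u; v]) /= ?andbT //.
  by move=> y; rewrite !inE.
rewrite /noninv uv ltn_neqAle leqNgt not_desc andbT /=.
by rewrite (inj_eq val_inj) (inj_eq perm_inj).
Qed.

Lemma quasi_inv_setD1 m m' X x y : quasi_inv m w X -> (x < y)%N ->
  invk m' w (X :\ x) -> invk m' w (X :\ y) -> noninv x y.
Proof.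
move=> /quasi_inv_noninv[u [v [uX vX nuv]]] xy invx invy.
have /andP[uv _] := nuv; move: xy.
case: (invk_setD1 invx uX vX nuv) (invk_setD1 invy uX vX nuv) => -> [] -> //;
  by rewrite ?ltnn // ltnNge ltnW.
Qed.

End Inversions.

Section Indicators.
Variables (T : eqType) (r : rel T) (c : T).
Hypothesis r_trans : transitive r.

Lemma upset_indicator_homo :
  {homo (fun x => ((x == c) || r c x)%:R : int) : a b / r a b >-> (a <= b)%R}.
Proof.
move=> a b rab; rewrite ler_nat; case: (boolP (_ || _)) => // /orP[/eqP<- | rca].
  by rewrite lt0b rab orbT.
by rewrite lt0b (r_trans rca rab) orbT.
Qed.

Lemma downset_indicator_homo :
  {homo (fun x => - ((x == c) || r x c)%:R : int) : a b / r a b >-> (a <= b)%R}.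
Proof.
move=> a b rab; rewrite lerN2 ler_nat; case: (boolP (_ || _)) => // /orP[/eqP<- | rbc].
  by rewrite lt0b rab orbT.
by rewrite lt0b (r_trans rab rbc) orbT.
Qed.

End Indicators.

Section AlternatingSum.
Variables (k : nat) (T : eqType).
Implicit Types (h : T -> int) (s : seq T).
Local Open Scope ring_scope.

Definition sign (j : nat) : int := if odd (k - j.+1) then -1 else 1.

Fixpoint alt_sum h j s : int :=
  if s is x :: s' then sign j * h x + alt_sum h j.+1 s' else 0.

Lemma alt_sum_mid h j s1 x s2 :
  alt_sum h j (s1 ++ x :: s2) =
  alt_sum h j s1 + sign (j + size s1) * h x + alt_sum h (j + size s1).+1 s2.
Proof.
elim: s1 j => [|y s1 IH] j /=; first by rewrite addn0 add0r.
by rewrite IH addnS !addrA.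
Qed.

Lemma alt_sum_supp1 h j s c : uniq s -> {in s, forall x, x != c -> h x = 0} ->
  alt_sum h j s = if c \in s then sign (j + index c s) * h c else 0.
Proof.
elim: s j => [//|x s IH] j /andP[x_notin s_uniq] h0 /=.
have h0s : {in s, forall y, y != c -> h y = 0}.
  by move=> y ys; apply: h0; rewrite inE ys orbT.
rewrite inE eq_sym; case: (eqVneq x c) x_notin => [->|xc] c_notin /=.
  by rewrite addn0 IH // (negbTE c_notin) addr0.
by rewrite h0 ?mem_head // mulr0 add0r IH // addSnnS.
Qed.

End AlternatingSum.

Section Potential.
Variables (n k : nat) (w : 'S_n).
Implicit Types (h : 'I_n -> int) (S X Y Z : {set 'I_n}).
Local Open Scope ring_scope.

Definition potential h S := alt_sum k h 0 (elts S).

Lemma potential_supp1 h S c : {in S, forall x, x != c -> h x = 0} ->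
  potential h S = if c \in S then sign k (index c (elts S)) * h c else 0.
Proof.
move=> h0; rewrite /potential (alt_sum_supp1 (c := c) _ _ (uniq_elts S)) ?mem_elts //.
by move=> x; rewrite mem_elts; apply: h0.
Qed.

Lemma qcover_potential Y Z : qcover k w Y Z ->
  exists a b, noninv w a b /\ forall h, potential h Z = potential h Y + (h b - h a).
Proof.
case=> X [[|m] [qX /andP[// _ lt_mk] EP orient]].
have /andP[/eqP cardX _] := qX.
have [x0 _] := quasi_inv_noninv qX.
set s := elts X; set A := nth x0 s m; set B := nth x0 s m.+1.
have lt_m1 : (m.+1 < size s)%N by rewrite size_elts cardX ltnS.
have lt_m : (m < size s)%N := ltnW lt_m1.
have Es : s = take m s ++ A :: B :: drop m.+2 s.
  by rewrite /A /B -!drop_nth ?cat_take_drop.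
have XA : Xrem X m.+1 = X :\ A by rewrite (Xrem_nth x0) // -size_elts.
have XB : Xrem X m.+2 = X :\ B by rewrite (Xrem_nth x0) // -size_elts.
have nAB : noninv w A B.
  have inv_mem U : U \in [set Xrem X m.+1; Xrem X m.+2] -> invk k w U.
    by rewrite -EP !inE => /andP[].
  apply: (quasi_inv_setD1 (m' := k) qX); rewrite -?XA -?XB ?inv_mem ?set21 ?set22 //.
  by rewrite -[(A < B)%N]/(A < B)%O (lt_sorted_ltn_nth x0 (sorted_elts X)) ?inE.
have eltsA : elts (X :\ A) = take m s ++ B :: drop m.+2 s by exact: elts_setD1.
have eltsB : elts (X :\ B) = take m s ++ A :: drop m.+2 s.
  by rewrite -cat1s catA; apply: elts_setD1; rewrite -catA.
have size_t : size (take m s) = m by rewrite size_takel // ltnW.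
exists A, B; split => // h; rewrite /potential.
case: ifP orient => odd_km [-> ->];
  by rewrite XA XB eltsA eltsB !alt_sum_mid size_t /sign add0n odd_km; ring.
Qed.

End Potential.

Section PosetProperties.
Variables (n k : nat) (w : 'S_n).
Implicit Types (h : 'I_n -> int) (X Y Z : {set 'I_n}).
Local Open Scope ring_scope.

Lemma Ple_potential h Y Z : {homo h : a b / noninv w a b >-> a <= b} ->
  Ple k w Y Z -> potential k h Y <= potential k h Z.
Proof.
move=> h_homo; apply: clos_rt_homo => {}Y {}Z /qcover_potential[a [b [nab ->]]].
by rewrite lerDl subr_ge0 h_homo.
Qed.

Lemma Ple_antisym Y Z : Ple k w Y Z -> Ple k w Z Y -> Y = Z.
Proof.
apply: (clos_rt_antisym (f := potential k (fun x => (val x)%:Z))) => {}Y {}Z.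
by case/qcover_potential => a [b [/andP[ab _] ->]]; rewrite ltrDl subr_gt0 ltz_nat.
Qed.

Lemma Ple_setD1 m X x y : invk m w X -> x \in X -> y \in X ->
  Ple k w (X :\ x) (X :\ y) -> x = y.
Proof.
move=> invX xX yX le_xy; apply/eqP/contraT => neq_xy.
have xXy : x \in X :\ y by rewrite !inE neq_xy xX.
have sign_ge0 h : {homo h : a b / noninv w a b >-> a <= b} ->
    {in X, forall z, z != x -> h z = 0} -> 0 <= sign k (index x (elts (X :\ y))) * h x.
  move=> h_homo h0; have := Ple_potential h_homo le_xy.
  by rewrite !(potential_supp1 k (c := x)) ?setD11 ?xXy // => z /setD1P[_ /h0].
have up0 : {in X, forall z, z != x -> ((z == x) || noninv w x z)%:R = 0 :> int}.
  by move=> z zX /negbTE->; rewrite (negbTE (invk_noninv invX xX zX)).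
have down0 : {in X, forall z, z != x -> - ((z == x) || noninv w z x)%:R = 0 :> int}.
  by move=> z zX /negbTE->; rewrite (negbTE (invk_noninv invX zX xX)) oppr0.
have := sign_ge0 _ (upset_indicator_homo x (@noninv_trans _ w)) up0.
have := sign_ge0 _ (downset_indicator_homo x (@noninv_trans _ w)) down0.
by rewrite eqxx /sign; case: odd.
Qed.

End PosetProperties.

Theorem lemma3p5 (n k : nat) (w : 'S_n) :
  (0 < n)%N -> (1 <= k <= n)%N ->
  [/\ (forall Y, invk k w Y -> Ple k w Y Y),
      (forall Y Z U, invk k w Y -> invk k w Z -> invk k w U ->
         Ple k w Y Z -> Ple k w Z U -> Ple k w Y U),
      (forall Y Z, invk k w Y -> invk k w Z ->
         Ple k w Y Z -> Ple k w Z Y -> Y = Z) &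
      (forall X, invk k.+1 w X ->
         forall Y Z, Y \in PX X -> Z \in PX X -> Ple k w Y Z -> Y = Z)].
Proof.
move=> n_gt0 _; pose x0 : 'I_n := Ordinal n_gt0.
split.
- by move=> Y _; apply: rt_refl.
- by move=> Y Z U _ _ _; apply: rt_trans.
- by move=> Y Z _ _; apply: Ple_antisym.
move=> X invX _ _ /imsetP[a _ ->] /imsetP[b _ ->].
rewrite !(Xrem_nth x0) ?ltn_ord // => /(Ple_setD1 invX) -> //;
  by rewrite -mem_elts mem_nth ?size_elts ?ltn_ord.
Qed.
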